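(* Let $n\geq 3$ and let $T$ be the $n\times n$ symmetric tridiagonal matrix with diagonal entries $T_{ii}=a_i\geq 0$ ($1\le i\le n$), off-diagonal entries $T_{j,j+1}=T_{j+1,j}=b_j\geq 0$ ($1\le j\le n-1$), and all other entries zero. Then $T$ is infinitely divisible if and only if $T$ is positive semidefinite and $b_ib_{i+1}=0$ for every $i\in\{1,2,\ldots,n-2\}$.
   Context: For a nonnegative matrix $A=[a_{ij}]$ and $r>0$, the Hadamard power is $A^{\circ r}=[a_{ij}^r]$. A nonnegative symmetric matrix $A$ is infinitely divisible if $A^{\circ r}$ is positive semidefinite for every $r>0$. *)

From HB Require Import structures.
From mathcomp Require Import all_boot all_order all_algebra.
From mathcomp Require Import reals exp.
Set Implicit Arguments. Unset Strict Implicit. Unset Printing Implicit Defensive.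
Import Order.TTheory GRing.Theory Num.Theory.
Local Open Scope ring_scope.

Definition psd (R : realType) (n : nat) (A : 'M[R]_n) : Prop :=
  A^T = A /\ forall x : 'cV[R]_n, 0 <= (x^T *m A *m x) 0 0.

(* Hadamard power A^{o r} = [a_ij ^ r], using powR (with 0 `^ r = 0 for r > 0). *)
Definition hadamard_pow (R : realType) (n : nat) (A : 'M[R]_n) (r : R) : 'M[R]_n :=
  map_mx (fun x => x `^ r) A.

Definition infinitely_divisible (R : realType) (n : nat) (A : 'M[R]_n) : Prop :=
  (forall i j, 0 <= A i j) /\ A^T = A /\
  forall r : R, 0 < r -> psd (hadamard_pow A r).

(* Symmetric tridiagonal matrix, 0-based: diagonal a_0..a_{n-1},
   off-diagonal T_{j,j+1} = T_{j+1,j} = b_j for j < n-1. *)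
Definition tridiag (R : realType) (n : nat) (a b : nat -> R) : 'M[R]_n :=
  \matrix_(i < n, j < n)
    (if i == j :> nat then a i
     else if j == i.+1 :> nat then b i
     else if i == j.+1 :> nat then b j
     else 0).

From HB Require Import structures.
From mathcomp Require Import all_boot all_order all_algebra.
From mathcomp Require Import reals exp.
From mathcomp Require Import zify ring lra.
Import Order.TTheory GRing.Theory Num.Theory.
Local Open Scope ring_scope.

(* Hadamard powers of a nonnegative tridiagonal matrix are again tridiagonal,
   with entries a_i^r and b_j^r.  When no two consecutive b_j are nonzero, the
   quadratic form of such a matrix splits into disjoint 1x1 and 2x2 blocks, and
   each 2x2 block stays positive semidefinite under powers because
   b_j^2 <= a_j a_(j+1) implies (b_j^r)^2 <= a_j^r a_(j+1)^r.  Conversely, if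
   b_i b_(i+1) > 0 then a_i, a_(i+1), a_(i+2) > 0, and the 3x3 principal minor
   of the r-th power is (a_i a_(i+1) a_(i+2))^r (1 - u^r - v^r) with
   u = b_i^2 / (a_i a_(i+1)) > 0 and v = b_(i+1)^2 / (a_(i+1) a_(i+2)) > 0;
   since u^r, v^r -> 1 as r -> 0, this minor is negative for small r. *)

Section BinaryAndTernaryForms.
Context {R : realFieldType}.
Implicit Types (a b c d e : R).

Lemma qform2_ge0P a b c :
  (forall x y, 0 <= a * x ^+ 2 + c * y ^+ 2 + 2 * (b * x * y)) <->
  [/\ 0 <= a, 0 <= c & b ^+ 2 <= a * c].
Proof.
split=> [H|[a0 c0 bac] x y].
  have a0 : 0 <= a by have := H 1 0; rewrite expr1n expr0n /=; lra.
  have c0 : 0 <= c by have := H 0 1; rewrite expr1n expr0n /=; lra.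
  split=> //; have [a_gt0|a_eq0] : 0 < a \/ a = 0 by lra.
    have := H (- b) a.
    have -> : a * (- b) ^+ 2 + c * a ^+ 2 + 2 * (b * - b * a) = a * (a * c - b ^+ 2) by ring.
    by rewrite pmulr_rge0 // subr_ge0.
  by move: (H c (- b)) (H (- b) 1); rewrite a_eq0; nra.
have [a_gt0|a_eq0] : 0 < a \/ a = 0 by lra.
  rewrite -(pmulr_rge0 _ a_gt0).
  have -> : a * (a * x ^+ 2 + c * y ^+ 2 + 2 * (b * x * y)) =
    (a * x + b * y) ^+ 2 + (a * c - b ^+ 2) * y ^+ 2 by ring.
  by rewrite addr_ge0 ?sqr_ge0 // mulr_ge0 ?sqr_ge0 ?subr_ge0.
have b_eq0 : b = 0 by apply/eqP; rewrite -sqrf_eq0 eq_le sqr_ge0 andbT -(mul0r c) -a_eq0.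
by rewrite a_eq0 b_eq0; nra.
Qed.
Lemma qform3_ge0_det a b c d e :
  (forall x y z, 0 <= a * x ^+ 2 + c * y ^+ 2 + e * z ^+ 2 + 2 * (b * x * y + d * y * z)) ->
  0 < a -> 0 < e -> b ^+ 2 * e + d ^+ 2 * a <= a * c * e.
Proof.
move=> H a0 e0; have := H (- (b * e)) (a * e) (- (d * a)).
have -> : a * (- (b * e)) ^+ 2 + c * (a * e) ^+ 2 + e * (- (d * a)) ^+ 2 +
    2 * (b * - (b * e) * (a * e) + d * (a * e) * - (d * a)) =
  (a * e) * (a * c * e - (b ^+ 2 * e + d ^+ 2 * a)) by ring.
by rewrite pmulr_rge0 ?mulr_gt0 // subr_ge0.
Qed.

End BinaryAndTernaryForms.

Section TridiagonalQuadraticForm.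
Context {R : realType}.
Implicit Types (A B f g : nat -> R).

Definition tridiag_qform A B f m : R :=
  \sum_(0 <= k < m.+1) A k * f k ^+ 2 + 2 * \sum_(0 <= k < m) B k * f k * f k.+1.

Lemma tridiag_qform0 A B f : tridiag_qform A B f 0 = A 0 * f 0 ^+ 2.
Proof. by rewrite /tridiag_qform big_nat1 big_geq // mulr0 addr0. Qed.

Lemma tridiag_qformS A B f m : tridiag_qform A B f m.+1 =
  tridiag_qform A B f m + A m.+1 * f m.+1 ^+ 2 + 2 * (B m * f m * f m.+1).
Proof.
by rewrite /tridiag_qform [in LHS]big_nat_recr //= [X in 2 * X]big_nat_recr //=; ring.
Qed.

Definition tridiag_entry A B i j : R :=
  if i == j then A i else if j == i.+1 then B i else if i == j.+1 then B j else 0.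

Lemma tridiag_double_sum A B f m :
  \sum_(0 <= j < m.+1) \sum_(0 <= i < m.+1) f i * tridiag_entry A B i j * f j =
  tridiag_qform A B f m.
Proof.
elim: m => [|m IH]; first by rewrite !big_nat1 tridiag_qform0 /tridiag_entry eqxx; ring.
have last_only (F : nat -> R) :
    (forall i, (i < m)%N -> F i = 0) -> \sum_(0 <= i < m.+1) F i = F m.
  move=> F0; rewrite big_nat_recr //= big_nat_cond big1 ?add0r // => i.
  by case/andP=> /andP[_ /F0].
rewrite big_nat_recr //=.
under eq_big_nat => j _ do rewrite big_nat_recr //=.
rewrite big_split /= IH [X in _ + X = _]big_nat_recr //= tridiag_qformS.
rewrite !last_only => [|i im|i im]; try by rewrite /tridiag_entry !ifF ?mulr0 ?mul0r //; lia.
rewrite /tridiag_entry !eqxx !ifF; try lia.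
ring.
Qed.

Lemma tridiag_qformE A B f m :
  ((\col_(k < m.+1) f k)^T *m tridiag m.+1 A B *m \col_(k < m.+1) f k) 0 0 =
  tridiag_qform A B f m.
Proof.
rewrite -tridiag_double_sum mxE [RHS]big_mkord; apply: eq_bigr => j _.
rewrite !mxE mulr_suml big_mkord; apply: eq_bigr => i _.
by rewrite !mxE.
Qed.

Lemma tridiagT n A B : (tridiag n A B)^T = tridiag n A B.
Proof.
apply/matrixP => i j; rewrite !mxE.
have [->|_] := eqVneq (i : nat) j; first by [].
by have [ij1|//] := eqVneq (i : nat) j.+1; rewrite ifF //; lia.
Qed.

Lemma psd_tridiagP A B m :
  psd (tridiag m.+1 A B) <-> forall f, 0 <= tridiag_qform A B f m.
Proof.
split=> [[_ psdT] f|qform_ge0]; first by rewrite -tridiag_qformE.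
split=> [|x]; first exact: tridiagT.
have -> : x = \col_(k < m.+1) x (inord k) 0.
  by apply/matrixP => i j; rewrite !mxE inord_val (ord1 j).
by rewrite (tridiag_qformE _ _ (fun k => x (inord k) 0)).
Qed.

Lemma sum_nat_window (F : nat -> R) k l N : (k + l <= N)%N ->
  (forall i, (i < k)%N || (k + l <= i)%N -> F i = 0) ->
  \sum_(0 <= i < N) F i = \sum_(0 <= i < l) F (i + k)%N.
Proof.
move=> klN F0; have kN := leq_trans (leq_addr l k) klN.
rewrite (big_cat_nat (n:=k)) // (big_cat_nat (n:=k + l) (leq_addr l k) klN) /=.
rewrite big_nat_cond big1 ?add0r; last by move=> i /andP[/andP[_ ik] _]; rewrite F0 ?ik.
rewrite [X in _ + X]big_nat_cond [X in _ + X]big1 ?addr0; last first.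
  by move=> i /andP[/andP[ki _] _]; rewrite F0 ?ki ?orbT.
by rewrite -{1}(add0n k) big_addn addKn.
Qed.

Lemma tridiag_qform_window A B g k l m : (k + l <= m)%N ->
  (forall i, (l < i)%N -> g i = 0) ->
  tridiag_qform A B (fun i => if (k <= i)%N then g (i - k)%N else 0) m =
  tridiag_qform (fun i => A (i + k)%N) (fun i => B (i + k)%N) g l.
Proof.
move=> klm g0; rewrite /tridiag_qform.
rewrite [X in X + _](@sum_nat_window _ k l.+1) ?addnS //; last first.
  move=> i; case: (leqP k i) => [ki|_ _]; last by rewrite expr0n mulr0.
  move=> /= hi; rewrite g0 ?expr0n ?mulr0 //; lia.
rewrite [X in 2 * X](@sum_nat_window _ k l) //; last first.
  move=> i; case: (leqP k i) => [ki|_ _]; last by rewrite mulr0 mul0r.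
  move=> /= hi; rewrite (leqW ki) [g (i.+1 - k)%N]g0 ?mulr0 //; lia.
congr (_ + 2 * _); apply: eq_bigr => i _.
  by rewrite leq_addl addnK.
by rewrite -addSn !leq_addl !addnK.
Qed.

Lemma psd_tridiag_minor2 {A B m k} : psd (tridiag m.+1 A B) -> (k < m)%N ->
  B k ^+ 2 <= A k * A k.+1.
Proof.
move=> /psd_tridiagP psdT km; suff /qform2_ge0P[] : forall x y,
    0 <= A k * x ^+ 2 + A k.+1 * y ^+ 2 + 2 * (B k * x * y) by [].
move=> x y; have := psdT (fun i => if (k <= i)%N then [:: x; y]`_(i - k) else 0).
rewrite (@tridiag_qform_window _ _ _ k 1) ?addn1 // => [|i i1]; last first.
  by rewrite nth_default.
by rewrite tridiag_qformS tridiag_qform0 /= add1n.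
Qed.

Lemma psd_tridiag_minor3 {A B m k} : psd (tridiag m.+1 A B) -> (k.+2 <= m)%N ->
  0 < A k -> 0 < A k.+2 -> B k ^+ 2 * A k.+2 + B k.+1 ^+ 2 * A k <= A k * A k.+1 * A k.+2.
Proof.
move=> /psd_tridiagP psdT km; apply: qform3_ge0_det => x y z.
have := psdT (fun i => if (k <= i)%N then [:: x; y; z]`_(i - k) else 0).
rewrite (@tridiag_qform_window _ _ _ k 2) ?addn2 // => [|i i2]; last first.
  by rewrite nth_default.
by rewrite !tridiag_qformS tridiag_qform0 /= add1n addSn add1n; congr (0 <= _); ring.
Qed.

Lemma tridiag_qform_ge0 A B f m :
  (forall i, (i < m.+1)%N -> 0 <= A i) ->
  (forall k, (k < m)%N -> B k ^+ 2 <= A k * A k.+1) ->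
  (forall k, (k.+1 < m)%N -> B k * B k.+1 = 0) ->
  0 <= tridiag_qform A B f m.
Proof.
move=> A_ge0 B_minor2 B_sparse.
have diag_ge0 i : (i < m.+1)%N -> 0 <= A i * f i ^+ 2.
  by move=> im; rewrite mulr_ge0 ?A_ge0 ?sqr_ge0.
have pair_ge0 k : (k < m)%N ->
    0 <= A k * f k ^+ 2 + A k.+1 * f k.+1 ^+ 2 + 2 * (B k * f k * f k.+1).
  by move=> km; apply: (qform2_ge0P _ _ _).2; split; rewrite ?A_ge0 ?B_minor2 //; apply: ltnW.
suff qform_ge0 j : (j <= m)%N -> 0 <= tridiag_qform A B f j by apply: qform_ge0.
elim/ltn_ind: j => -[|[|j]] IH jm.
- by rewrite tridiag_qform0 diag_ge0.
- by rewrite tridiag_qformS tridiag_qform0 pair_ge0.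
have [Bj1|Bj1] := eqVneq (B j.+1) 0.
  by rewrite tridiag_qformS Bj1 !mul0r mulr0 addr0 addr_ge0 ?diag_ge0 ?IH // ltnW.
have Bj : B j = 0 by move/eqP: (B_sparse j jm); rewrite mulf_eq0 (negbTE Bj1) orbF => /eqP.
have qj : 0 <= tridiag_qform A B f j by apply: IH; lia.
rewrite !tridiag_qformS Bj !mul0r mulr0 addr0.
by have := addr_ge0 qj (pair_ge0 _ jm); rewrite !addrA.
Qed.

End TridiagonalQuadraticForm.

Section HadamardPowers.
Context {R : realType}.
Implicit Types (A B : nat -> R) (u v r : R).

Lemma powR_ge1Dln r u : 0 < u -> 1 + r * ln u <= u `^ r.
Proof. by move=> u0; rewrite /powR gt_eqF // expR_ge1Dx. Qed.

Lemma exists_powR_sum_gt1 u v : 0 < u -> 0 < v ->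
  exists2 r, 0 < r & 1 < u `^ r + v `^ r.
Proof.
move=> u0 v0; pose s := ln u + ln v; pose r := (1 + s ^+ 2)^-1.
have s2_gt0 : 0 < 1 + s ^+ 2 by rewrite ltr_pwDl ?sqr_ge0.
have r0 : 0 < r by rewrite invr_gt0.
exists r => //.
(* u^r + v^r >= 2 + r s, and 0 <= r (1 + s)^2 = 1 + 2 r s gives r s >= -1/2. *)
have rs : r * (1 + s ^+ 2) = 1 by rewrite mulVf ?gt_eqF.
have rs_ge0 : 0 <= r * (1 + s) ^+ 2 by rewrite mulr_ge0 ?sqr_ge0 ?ltW.
have := powR_ge1Dln r _ u0; have := powR_ge1Dln r _ v0.
rewrite /s in rs rs_ge0; nra.
Qed.

Lemma hadamard_pow1 {n} {M : 'M[R]_n} : (forall i j, 0 <= M i j) -> hadamard_pow M 1 = M.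
Proof. by move=> M_ge0; apply/matrixP => i j; rewrite mxE powRr1. Qed.

Lemma hadamard_pow_tridiag n A B r : r != 0 ->
  hadamard_pow (tridiag n A B) r = tridiag n (fun i => A i `^ r) (fun j => B j `^ r).
Proof.
by move=> r0; apply/matrixP => i j; rewrite !mxE; repeat case: ifP => _; rewrite ?powR0.
Qed.

Lemma tridiag_ge0 n A B : (forall i, (i < n)%N -> 0 <= A i) ->
  (forall j, (j.+1 < n)%N -> 0 <= B j) -> forall i j, 0 <= tridiag n A B i j.
Proof.
move=> A_ge0 B_ge0 i j; rewrite mxE.
case: ifP => _; first exact: A_ge0.
case: ifP => [/eqP ji|_]; first by apply: B_ge0; rewrite -ji.
by case: ifP => [/eqP ij|//]; apply: B_ge0; rewrite -ij.
Qed.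

Lemma psd_tridiag_powR A B m r : 0 < r ->
  (forall i, (i < m.+1)%N -> 0 <= A i) -> (forall j, (j < m)%N -> 0 <= B j) ->
  psd (tridiag m.+1 A B) -> (forall k, (k.+1 < m)%N -> B k * B k.+1 = 0) ->
  psd (tridiag m.+1 (fun i => A i `^ r) (fun j => B j `^ r)).
Proof.
move=> r0 A_ge0 B_ge0 psdT B_sparse; apply/psd_tridiagP => f.
apply: tridiag_qform_ge0 => [i _|k km|k km].
- exact: powR_ge0.
- have a0 := A_ge0 k (ltnW km); have a1 := A_ge0 k.+1 km; have b0 := B_ge0 k km.
  rewrite expr2 -!powRM //; apply: (ge0_ler_powR (ltW r0)); rewrite ?nnegrE ?mulr_ge0 //.
  by rewrite -expr2; apply: psd_tridiag_minor2 psdT km.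
- by rewrite -powRM ?B_ge0 ?(ltnW km) // B_sparse // powR0 // gt_eqF.
Qed.

Lemma psd_tridiag_powR_sparse {A B m k} :
  (forall r, 0 < r -> psd (tridiag m.+1 (fun i => A i `^ r) (fun j => B j `^ r))) ->
  psd (tridiag m.+1 A B) -> (k.+2 <= m)%N ->
  0 <= A k -> 0 <= A k.+1 -> 0 <= A k.+2 -> 0 <= B k -> 0 <= B k.+1 ->
  B k * B k.+1 = 0.
Proof.
move=> psd_pow psdT km a0 a1 a2 b0 b1; apply/eqP; apply: contraT.
rewrite mulf_eq0 negb_or => /andP[b0_neq0 b1_neq0].
have b0_gt0 : 0 < B k by rewrite lt_def b0_neq0.
have b1_gt0 : 0 < B k.+1 by rewrite lt_def b1_neq0.
have minor0 := psd_tridiag_minor2 psdT (ltnW km).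
have minor1 := psd_tridiag_minor2 psdT km.
have a0_gt0 : 0 < A k by nra.
have a1_gt0 : 0 < A k.+1 by nra.
have a2_gt0 : 0 < A k.+2 by nra.
set u := B k ^+ 2 / (A k * A k.+1); set v := B k.+1 ^+ 2 / (A k.+1 * A k.+2).
have [r r0 uv_gt1] : exists2 r, 0 < r & 1 < u `^ r + v `^ r.
  by apply: exists_powR_sum_gt1; rewrite divr_gt0 ?mulr_gt0 ?exprn_gt0.
have powR_sqr x y : 0 <= x -> 0 < y -> (x `^ r) ^+ 2 = (x ^+ 2 / y) `^ r * y `^ r.
  move=> x0 y0; rewrite -powRM ?divr_ge0 ?sqr_ge0 ?ltW // divfK ?gt_eqF //.
  by rewrite !expr2 powRM.
have := psd_tridiag_minor3 (psd_pow r r0) km (powR_gt0 r a0_gt0) (powR_gt0 r a2_gt0).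
rewrite (powR_sqr _ _ b0 (mulr_gt0 a0_gt0 a1_gt0)) (powR_sqr _ _ b1 (mulr_gt0 a1_gt0 a2_gt0)).
rewrite -/u -/v (powRM r (ltW a0_gt0) (ltW a1_gt0)) (powRM r (ltW a1_gt0) (ltW a2_gt0)).
set P := A k `^ r * A k.+1 `^ r * A k.+2 `^ r.
have P_gt0 : 0 < P by rewrite !mulr_gt0 ?powR_gt0.
have -> : u `^ r * (A k `^ r * A k.+1 `^ r) * A k.+2 `^ r +
    v `^ r * (A k.+1 `^ r * A k.+2 `^ r) * A k `^ r = (u `^ r + v `^ r) * P.
  by rewrite /P; ring.
by rewrite -{2}(mul1r P) ler_pM2r // leNgt uv_gt1.
Qed.

End HadamardPowers.

Theorem theorem1p4 (R : realType) (n : nat) (a b : nat -> R) :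
  (3 <= n)%N ->
  (forall i, (i < n)%N -> 0 <= a i) ->
  (forall j, (j.+1 < n)%N -> 0 <= b j) ->
  infinitely_divisible (tridiag n a b) <->
  (psd (tridiag n a b) /\ forall i, (i.+2 < n)%N -> b i * b i.+1 = 0).
Proof.
case: n => [//|m] _ a_ge0 b_ge0.
have hadamard_powE r : 0 < r -> hadamard_pow (tridiag m.+1 a b) r =
    tridiag m.+1 (fun i => a i `^ r) (fun j => b j `^ r).
  by move=> r0; rewrite hadamard_pow_tridiag ?gt_eqF.
split=> [[T_ge0 [_ psd_pow]]|[psdT b_sparse]].
  have psdT : psd (tridiag m.+1 a b) by rewrite -(hadamard_pow1 T_ge0); apply: psd_pow.
  split=> // i im.
  have [ai ai1 ai2] : [/\ 0 <= a i, 0 <= a i.+1 & 0 <= a i.+2] by split; apply: a_ge0; lia.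
  have [bi bi1] : 0 <= b i /\ 0 <= b i.+1 by split; apply: b_ge0; lia.
  apply: (psd_tridiag_powR_sparse _ psdT im ai ai1 ai2 bi bi1) => r r0.
  by rewrite -hadamard_powE //; apply: psd_pow.
split; first exact: tridiag_ge0.
split=> [|r r0]; first exact: tridiagT.
by rewrite hadamard_powE //; apply: psd_tridiag_powR.
Qed.
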